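(* Consider a mean-variance team stochastic game as described in the context and run Algorithm MV-MAPI (described in the context) from any deterministic initial joint policy. Then $J(\hat{\boldsymbol{\mu}}^{(k,0)})\le J(\hat{\boldsymbol{\mu}}^{(k,1)})\le\cdots\le J(\hat{\boldsymbol{\mu}}^{(k,N)})$ for every outer iteration $k$, so the sequence $(J(\boldsymbol{\mu}^{(k)}))_k$ is monotonically non-decreasing; the algorithm converges, and the joint policy $\tilde{\boldsymbol{\mu}}$ it converges to (the returned joint policy) is a first-order stationary point, i.e. for every agent $i\in\mathcal{N}$ and every $\mu_i\in\mathcal{U}_i$, $\frac{\mathrm{d}}{\mathrm{d}\delta}J\big((1-\delta)\tilde{\mu}_i+\delta\mu_i,\tilde{\boldsymbol{\mu}}_{-i}\big)\big|_{\delta=0}\le 0$ (right derivative).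
   Context: Game: finite agents $\mathcal{N}=\{1,\dots,N\}$, finite state space $\mathcal{S}$, finite action sets $\mathcal{A}_i$, $\mathcal{A}=\prod_i\mathcal{A}_i$, transition kernel $P(s'|s,\boldsymbol{a})$, common reward $r:\mathcal{S}\times\mathcal{A}\to\mathbb{R}$. Policies $\mu_i:\mathcal{S}\to\Delta(\mathcal{A}_i)$ (set $\mathcal{U}_i$); joint policies $\boldsymbol{\mu}\in\mathcal{U}=\prod_i\mathcal{U}_i$ with $\boldsymbol{\mu}(\boldsymbol{a}|s)=\prod_i\mu_i(a_i|s)$; $(\mu_i,\boldsymbol{\mu}_{-i})$ means agent $i$ uses $\mu_i$, others use $\boldsymbol{\mu}_{-i}$; $(1-\delta)\tilde\mu_i+\delta\mu_i$ is the policy $s\mapsto(1-\delta)\tilde\mu_i(\cdot|s)+\delta\mu_i(\cdot|s)$. Standing assumption: the chain $P^{\boldsymbol{\mu}}(s'|s)=\sum_{\boldsymbol{a}}\boldsymbol{\mu}(\boldsymbol{a}|s)P(s'|s,\boldsymbol{a})$ is ergodic for every $\boldsymbol{\mu}\in\mathcal{U}$, stationary distribution $\pi^{\boldsymbol{\mu}}$. $\eta^{\boldsymbol{\mu}}=\sum_s\pi^{\boldsymbol{\mu}}(s)\sum_{\boldsymbol{a}}\boldsymbol{\mu}(\boldsymbol{a}|s)r(s,\boldsymbol{a})$; $\zeta^{\boldsymbol{\mu}}=\sum_s\pi^{\boldsymbol{\mu}}(s)\sum_{\boldsymbol{a}}\boldsymbol{\mu}(\boldsymbol{a}|s)(r(s,\boldsymbol{a})-\eta^{\boldsymbol{\mu}})^2$;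 for fixed $\beta\ge0$, $J(\boldsymbol{\mu})=\eta^{\boldsymbol{\mu}}-\beta\zeta^{\boldsymbol{\mu}}$. $f^{\boldsymbol{\mu}}(s,\boldsymbol{a})=r(s,\boldsymbol{a})-\beta(r(s,\boldsymbol{a})-\eta^{\boldsymbol{\mu}})^2$, $f^{\boldsymbol{\mu}}(s)=\sum_{\boldsymbol{a}}\boldsymbol{\mu}(\boldsymbol{a}|s)f^{\boldsymbol{\mu}}(s,\boldsymbol{a})$; $V_f^{\boldsymbol{\mu}}$ solves $V(s)=f^{\boldsymbol{\mu}}(s)-J(\boldsymbol{\mu})+\sum_{s'}P^{\boldsymbol{\mu}}(s'|s)V(s')$ (unique up to an additive constant); $Q_f^{\boldsymbol{\mu}}(s,\boldsymbol{a})=f^{\boldsymbol{\mu}}(s,\boldsymbol{a})-J(\boldsymbol{\mu})+\sum_{s'}P(s'|s,\boldsymbol{a})V_f^{\boldsymbol{\mu}}(s')$, $A_f^{\boldsymbol{\mu}}=Q_f^{\boldsymbol{\mu}}-V_f^{\boldsymbol{\mu}}$. Algorithm MV-MAPI: start with a deterministic joint policy $\boldsymbol{\mu}^{(0)}$. For $k=0,1,\dots$: set $\hat{\boldsymbol{\mu}}^{(k,0)}=\boldsymbol{\mu}^{(k)}$ and draw a random permutation $i_1,\dots,i_N$ of the agents. For $h=1,\dots,N$: compute $A_f^{\hat{\boldsymbol{\mu}}^{(k,h-1)}}$ and, for every $s$, set $\mu^{(k+1)}_{i_h}(s)$ to be an action $a_{i_h}$ maximizing $\mathbb{E}_{\boldsymbol{a}_{-i_h}\sim\hat{\boldsymbol{\mu}}^{(k,h-1)}_{-i_h}(\cdot|s)}\big[A_f^{\hat{\boldsymbol{\mu}}^{(k,h-1)}}(s,a_{i_h},\boldsymbol{a}_{-i_h})\big]$,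 choosing $\mu^{(k+1)}_{i_h}(s)=\mu^{(k)}_{i_h}(s)$ whenever $\mu^{(k)}_{i_h}(s)$ already attains the maximum; then set $\hat{\boldsymbol{\mu}}^{(k,h)}=(\mu^{(k+1)}_{i_1},\dots,\mu^{(k+1)}_{i_h},\mu^{(k)}_{i_{h+1}},\dots,\mu^{(k)}_{i_N})$. If $\mu^{(k+1)}_i=\mu^{(k)}_i$ for all $i$, stop and return $\boldsymbol{\mu}^{(k)}$; otherwise set $\boldsymbol{\mu}^{(k+1)}=\hat{\boldsymbol{\mu}}^{(k,N)}$ and continue. *)

From HB Require Import structures.
From mathcomp Require Import all_boot all_order all_algebra all_fingroup.
From mathcomp Require Import all_classical all_reals all_analysis.
Set Implicit Arguments. Unset Strict Implicit. Unset Printing Implicit Defensive.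
Import Order.TTheory GRing.Theory Num.Theory numFieldNormedType.Exports.
Local Open Scope ring_scope.
Local Open Scope classical_set_scope.

Definition jact (N : nat) (A : 'I_N -> finType) := {dffun forall i : 'I_N, A i}.

(* A (stochastic) joint policy: mu i s a = mu_i(a | s). *)
Definition jpol (R : realType) (S : finType) (N : nat) (A : 'I_N -> finType) :=
  forall i : 'I_N, S -> A i -> R.

Definition is_policy_i (R : realType) (S : finType) (Ai : finType)
  (mu : S -> Ai -> R) : Prop :=
  forall s, (forall a, 0 <= mu s a) /\ \sum_(a : Ai) mu s a = 1.

Definition is_jpolicy (R : realType) (S : finType) (N : nat) (A : 'I_N -> finType) (mu : @jpol R S N A) : Prop :=
  forall i, is_policy_i (mu i).

(* Transition kernel P(s'|s,a) = P s a s'. *)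
Definition is_kernel (R : realType) (S : finType) (N : nat) (A : 'I_N -> finType) (P : S -> jact A -> S -> R) : Prop :=
  forall s (a : jact A), (forall s', 0 <= P s a s') /\ \sum_(s' : S) P s a s' = 1.

Definition jprob (R : realType) (S : finType) (N : nat) (A : 'I_N -> finType) (mu : @jpol R S N A) (s : S) (a : jact A) : R :=
  \prod_(i < N) mu i s (a i).

Definition Pmu (R : realType) (S : finType) (N : nat) (A : 'I_N -> finType) (P : S -> jact A -> S -> R) (mu : @jpol R S N A)
  (s s' : S) : R :=
  \sum_(a : jact A) jprob mu s a * P s a s'.

Fixpoint pn (R : realType) (S : finType) (M : S -> S -> R) (n : nat) : S -> S -> R :=
  match n with
  | 0 => fun s s' => (s == s')%:R
  | n'.+1 => fun s s' => \sum_(t : S) pn M n' s t * M t s'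
  end.

Definition irreducible (R : realType) (S : finType) (M : S -> S -> R) : Prop :=
  forall s s', exists n, 0 < pn M n s s'.

Definition aperiodic (R : realType) (S : finType) (M : S -> S -> R) : Prop :=
  forall s (d : nat), (1 < d)%N ->
    ~ (forall n, (0 < n)%N -> 0 < pn M n s s -> (d %| n)%N).

Definition ergodic (R : realType) (S : finType) (M : S -> S -> R) : Prop :=
  irreducible M /\ aperiodic M.

Definition is_stationary (R : realType) (S : finType) (M : S -> S -> R) (p : {ffun S -> R}) : Prop :=
  (forall s, 0 <= p s) /\ \sum_(s : S) p s = 1 /\
  (forall s', \sum_(s : S) p s * M s s' = p s').

(* pi^mu : the stationary distribution (unique under ergodicity) *)
Definition pi_mu (R : realType) (S : finType) (N : nat) (A : 'I_N -> finType) (P : S -> jact A -> S -> R) (mu : @jpol R S N A)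
  : {ffun S -> R} :=
  xget [ffun => 0] [set p | is_stationary (Pmu P mu) p].

Definition eta (R : realType) (S : finType) (N : nat) (A : 'I_N -> finType) (P : S -> jact A -> S -> R) (r : S -> jact A -> R)
  (mu : @jpol R S N A) : R :=
  \sum_(s : S) pi_mu P mu s * \sum_(a : jact A) jprob mu s a * r s a.

Definition zeta (R : realType) (S : finType) (N : nat) (A : 'I_N -> finType) (P : S -> jact A -> S -> R) (r : S -> jact A -> R)
  (mu : @jpol R S N A) : R :=
  \sum_(s : S) pi_mu P mu s *
    \sum_(a : jact A) jprob mu s a * (r s a - eta P r mu) ^+ 2.

Definition Jmv (R : realType) (S : finType) (N : nat) (A : 'I_N -> finType) (P : S -> jact A -> S -> R) (r : S -> jact A -> R)
  (beta : R) (mu : @jpol R S N A) : R :=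
  eta P r mu - beta * zeta P r mu.

Definition f_sa (R : realType) (S : finType) (N : nat) (A : 'I_N -> finType) (P : S -> jact A -> S -> R) (r : S -> jact A -> R)
  (beta : R) (mu : @jpol R S N A) (s : S) (a : jact A) : R :=
  r s a - beta * (r s a - eta P r mu) ^+ 2.

Definition f_s (R : realType) (S : finType) (N : nat) (A : 'I_N -> finType) (P : S -> jact A -> S -> R) (r : S -> jact A -> R)
  (beta : R) (mu : @jpol R S N A) (s : S) : R :=
  \sum_(a : jact A) jprob mu s a * f_sa P r beta mu s a.

Definition is_Vf (R : realType) (S : finType) (N : nat) (A : 'I_N -> finType) (P : S -> jact A -> S -> R) (r : S -> jact A -> R)
  (beta : R) (mu : @jpol R S N A) (V : {ffun S -> R}) : Prop :=
  forall s, V s = f_s P r beta mu s - Jmv P r beta mu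
                  + \sum_(s' : S) Pmu P mu s s' * V s'.

(* a solution (unique up to an additive constant; A_f does not depend on the choice) *)
Definition Vf (R : realType) (S : finType) (N : nat) (A : 'I_N -> finType) (P : S -> jact A -> S -> R) (r : S -> jact A -> R)
  (beta : R) (mu : @jpol R S N A) : {ffun S -> R} :=
  xget [ffun => 0] [set V | is_Vf P r beta mu V].

Definition Qf (R : realType) (S : finType) (N : nat) (A : 'I_N -> finType) (P : S -> jact A -> S -> R) (r : S -> jact A -> R)
  (beta : R) (mu : @jpol R S N A) (s : S) (a : jact A) : R :=
  f_sa P r beta mu s a - Jmv P r beta mu + \sum_(s' : S) P s a s' * Vf P r beta mu s'.

Definition Af (R : realType) (S : finType) (N : nat) (A : 'I_N -> finType) (P : S -> jact A -> S -> R) (r : S -> jact A -> R)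
  (beta : R) (mu : @jpol R S N A) (s : S) (a : jact A) : R :=
  Qf P r beta mu s a - Vf P r beta mu s.

Definition ExpAdv (R : realType) (S : finType) (N : nat) (A : 'I_N -> finType) (P : S -> jact A -> S -> R) (r : S -> jact A -> R)
  (beta : R) (mu : @jpol R S N A) (j : 'I_N) (s : S) (aj : A j) : R :=
  \sum_(b : jact A)
     (\prod_(i < N | i != j) mu i s (b i)) * (b j == aj)%:R * Af P r beta mu s b.

Definition detpol (S : finType) (N : nat) (A : 'I_N -> finType) := forall i : 'I_N, S -> A i.

Definition of_det (R : realType) (S : finType) (N : nat) (A : 'I_N -> finType) (d : @detpol S N A) : @jpol R S N A :=
  fun i s a => (a == d i s)%:R.

Definition mix (R : realType) (S : finType) (N : nat) (A : 'I_N -> finType) (mu : @jpol R S N A) (i : 'I_N)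
  (nu : S -> A i -> R) (delta : R) : @jpol R S N A :=
  eqtype.dfwith (T := fun j => S -> A j -> R) mu
    (fun s a => (1 - delta) * mu i s a + delta * nu s a).
Arguments mix {R S N A} mu i nu delta.

Definition fo_stationary (R : realType) (S : finType) (N : nat) (A : 'I_N -> finType) (P : S -> jact A -> S -> R)
  (r : S -> jact A -> R) (beta : R) (mu : @jpol R S N A) : Prop :=
  forall (i : 'I_N) (nu : S -> A i -> R), is_policy_i nu ->
    exists l : R,
      ((fun delta : R => (Jmv P r beta (mix mu i nu delta) - Jmv P r beta (mix mu i nu 0))
                          / delta) @ (0 : R)^'+ --> l) /\ l <= 0.

(* MV-MAPI run: mu k = mu^(k); sigma k = permutation (sigma k h = i_{h+1}).
   hat mu sigma k h = \hat mu^(k,h): the first h agents of the order updated. *)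
Definition hat (S : finType) (N : nat) (A : 'I_N -> finType) (mu : nat -> @detpol S N A) (sigma : nat -> {perm 'I_N})
  (k h : nat) : @detpol S N A :=
  fun i => if (nat_of_ord ((sigma k)^-1 i)%g < h)%N then mu k.+1 i else mu k i.

Definition stopped (S : finType) (N : nat) (A : 'I_N -> finType) (mu : nat -> @detpol S N A) (k : nat) : Prop :=
  forall i s, mu k.+1 i s = mu k i s.

(* mu (k+1) collects the mu^(k+1)_i chosen in iteration k (equal to \hat mu^(k,N));
   once the stopping test holds, the iteration is a fixed point. *)
Definition MV_MAPI_run (R : realType) (S : finType) (N : nat) (A : 'I_N -> finType) (P : S -> jact A -> S -> R)
  (r : S -> jact A -> R) (beta : R)
  (mu : nat -> @detpol S N A) (sigma : nat -> {perm 'I_N}) : Prop :=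
  forall (k : nat) (h : 'I_N) (s : S),
    let j := sigma k h in
    let pol := of_det R (hat mu sigma k h) in
    (forall a : A j, ExpAdv P r beta pol s a <= ExpAdv P r beta pol s (mu k.+1 j s)) /\
    ((forall a : A j, ExpAdv P r beta pol s a <= ExpAdv P r beta pol s (mu k j s)) ->
       mu k.+1 j s = mu k j s).

(* Everything rests on the performance-difference identity for the
   mean-variance criterion: for joint policies mu and mu',
     J(mu') - J(mu) = E_{s ~ pi^mu', a ~ mu'(s)} [A_f^mu(s, a)]
                      + beta (eta^mu' - eta^mu)^2.
   In step h of a sweep only agent i_h changes, to an action maximising its
   expected advantage, which is 0 at its current action. Hence every term of
   the expectation is >= 0, and since pi^mu' > 0 (irreducibility) the gain is
   > 0 as soon as some action changes: J never decreases and increases strictly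
   at every non-stopping iteration, so the finitely many deterministic policies
   force the algorithm to stop. At the returned policy every expected advantage
   is <= 0. Along (1 - d) mu_i + d nu_i the stationary distribution moves by
   O(d) (solve a Poisson equation for the unperturbed chain), so the squared
   term is O(d^2) and the right derivative of J at 0 is
   E_pi [sum_a nu_i(a | s) ExpAdv(s, a)] <= 0. *)

From Pilot Require Import Defs.
From mathcomp Require Import all_boot all_order all_algebra all_fingroup.
From mathcomp Require Import all_classical all_reals all_analysis.
From mathcomp Require Import zify ring lra.
Import Order.TTheory GRing.Theory Num.Theory numFieldNormedType.Exports.
Local Open Scope ring_scope.

Lemma sum_jact_prod {R : comPzSemiRingType} {N : nat} {A : 'I_N -> finType}
    (w : forall i, A i -> R) :
  \sum_(b : jact A) \prod_(i < N) w i (b i) = \prod_(i < N) \sum_(a : A i) w i a.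
Proof.
pose w_ i := [ffun a : A i => w i a].
transitivity (\sum_(t : fprod A) \prod_(i < N) w_ i (t i)).
  rewrite (reindex (@dffun_of_fprod _ A)); last exact/onW_bij/dffun_of_fprod_bij.
  by apply: eq_bigr => t _; apply: eq_bigr => i _; rewrite !ffunE.
rewrite big_fprod -(bigA_distr_big_dep _ (fun i j => untag 0 (w_ i) j)).
apply: eq_bigr => i _.
transitivity (\sum_(a : A i) w_ i a); last by apply: eq_bigr => a _; rewrite ffunE.
by rewrite (big_tag (fun i a => w_ i a) i).
Qed.

Lemma wsum_affine {R : comPzRingType} {T : finType} {w F G : T -> R} a0 a1 a2 :
  \sum_x w x = 1 ->
  \sum_x w x * (a0 + a1 * F x + a2 * G x)
    = a0 + a1 * \sum_x w x * F x + a2 * \sum_x w x * G x.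
Proof.
move=> w1.
transitivity (\sum_x (w x * a0 + a1 * (w x * F x) + a2 * (w x * G x))).
  by apply: eq_bigr => x _; ring.
by rewrite !big_split /= -!mulr_sumr -mulr_suml w1 mul1r.
Qed.

Lemma norm_wsum_le {R : numDomainType} {T : finType} {w Y : T -> R} :
  (forall x, 0 <= w x) -> \sum_x w x = 1 -> `|\sum_x w x * Y x| <= \sum_x `|Y x|.
Proof.
move=> w_ge0 w1; apply: le_trans (ler_norm_sum _ _ _) _; apply: ler_sum => x _.
have w_le1 : w x <= 1 by rewrite -w1 (bigD1 x) //= lerDl sumr_ge0.
by rewrite normrM (ger0_norm (w_ge0 x)) ler_piMl.
Qed.

Lemma wsum_gt0 {R : numDomainType} {T : finType} {w F : T -> R} x0 :
  (forall x, 0 < w x) -> (forall x, 0 <= F x) -> 0 < F x0 -> 0 < \sum_x w x * F x.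
Proof.
move=> w_gt0 F_ge0 Fx0_gt0; rewrite (bigD1 x0) //= ltr_pwDl ?mulr_gt0 //.
by apply: sumr_ge0 => x _; rewrite mulr_ge0 ?F_ge0 // ltW.
Qed.

Definition stochastic {R : realType} {S : finType} (M : S -> S -> R) :=
  (forall s s', 0 <= M s s') /\ (forall s, \sum_s' M s s' = 1).

Definition is_invariant {R : realType} {S : finType} (M : S -> S -> R) (x : S -> R) :=
  forall s', \sum_s x s * M s s' = x s'.

Section MarkovChain.
Context {R : realType} {S : finType} {M : S -> S -> R}.

Lemma invariant_sub {x y} :
  is_invariant M x -> is_invariant M y -> is_invariant M (fun s => x s - y s).
Proof.
by move=> x_inv y_inv s'; rewrite -x_inv -y_inv -sumrB; apply: eq_bigr => s _; rewrite mulrBl.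
Qed.

Lemma invariant_scale c {x} : is_invariant M x -> is_invariant M (fun s => c * x s).
Proof. by move=> x_inv s'; rewrite -x_inv mulr_sumr; apply: eq_bigr => s _; rewrite mulrA. Qed.

Hypothesis M_stoch : stochastic M.

Lemma pn_ge0 n s s' : 0 <= pn M n s s'.
Proof.
elim: n s s' => [|n IH] s s' /=; first by rewrite ler0n.
by apply: sumr_ge0 => t _; rewrite mulr_ge0 ?M_stoch.1.
Qed.

Lemma invariant_pn {x} : is_invariant M x -> forall n s', \sum_s x s * pn M n s s' = x s'.
Proof.
move=> x_inv; elim=> [|n IH] s' /=.
  rewrite (bigD1 s') //= eqxx mulr1 big1 ?addr0 // => s /negPf.
  by rewrite eq_sym => ->; rewrite mulr0.
under eq_bigr do rewrite mulr_sumr.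
rewrite exchange_big /= -{1}(x_inv s'); apply: eq_bigr => t _.
by rewrite -IH mulr_suml; apply: eq_bigr => s _; rewrite mulrA.
Qed.

(* The total mass is preserved, so a subinvariant vector cannot be strictly
   subinvariant anywhere. *)
Lemma subinvariant_invariant {x} :
  (forall s', x s' <= \sum_s x s * M s s') -> is_invariant M x.
Proof.
move=> x_inv.
have mass : \sum_s' (\sum_s x s * M s s' - x s') = 0.
  rewrite sumrB exchange_big /=.
  by under eq_bigr do rewrite -mulr_sumr M_stoch.2 mulr1; rewrite subrr.
move=> s'; apply/eqP; rewrite -subr_eq0; apply/eqP.
have slack_ge0 t : true -> 0 <= \sum_s x s * M s t - x t by rewrite subr_ge0.
by have := psumr_eq0P slack_ge0 mass (i:=s') isT.
Qed.

Lemma invariant_max0 {x} : is_invariant M x -> is_invariant M (fun s => Num.max (x s) 0).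
Proof.
move=> x_inv; apply: subinvariant_invariant => s'.
rewrite ge_max; apply/andP; split; last first.
  by apply: sumr_ge0 => t _; rewrite mulr_ge0 ?M_stoch.1 // le_max lexx orbT.
rewrite -{1}(x_inv s'); apply: ler_sum => t _.
by rewrite ler_wpM2r ?M_stoch.1 // le_max lexx.
Qed.

Lemma invariant_norm {x} : is_invariant M x -> is_invariant M (fun s => `|x s|).
Proof.
move=> x_inv; apply: subinvariant_invariant => s'; rewrite -{1}(x_inv s').
apply: le_trans (ler_norm_sum _ _ _) _; apply: ler_sum => s _.
by rewrite normrM (ger0_norm (M_stoch.1 _ _)).
Qed.

Lemma stationary_card_gt0 {p} : is_stationary M p -> (0 < #|S|)%N.
Proof.
case=> _ [p1 _]; rewrite lt0n; apply: contra_eqN p1 => /eqP/card0_eq S0.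
by rewrite big_pred0 // eq_sym oner_eq0.
Qed.

Hypothesis M_irr : irreducible M.

Lemma invariant_ge0_eq0 {x s0} :
  is_invariant M x -> (forall s, 0 <= x s) -> x s0 = 0 -> forall s, x s = 0.
Proof.
move=> x_inv x_ge0 xs0 s; have [n pn_gt0] := M_irr s s0.
have := invariant_pn x_inv n s0; rewrite xs0 (bigD1 s) //=.
move/eqP; rewrite paddr_eq0 ?mulr_ge0 ?pn_ge0 ?sumr_ge0 // => [/andP[]|t _].
  by rewrite mulf_eq0 (gt_eqF pn_gt0) orbF => /eqP.
by rewrite mulr_ge0 ?pn_ge0.
Qed.

Lemma invariant_le0 {x s0} : is_invariant M x -> x s0 = 0 -> forall s, x s <= 0.
Proof.
move=> x_inv xs0 s.
have max0_ge0 t : 0 <= Num.max (x t) 0 by rewrite le_max lexx orbT.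
have max0_s0 : Num.max (x s0) 0 = 0 by rewrite xs0 maxxx.
have := invariant_ge0_eq0 (invariant_max0 x_inv) max0_ge0 max0_s0 s.
by move=> <-; rewrite le_max lexx.
Qed.

Lemma stationary_gt0 {p} : is_stationary M p -> forall s, 0 < p s.
Proof.
case=> p_ge0 [p1 p_inv] s; rewrite lt_def p_ge0 andbT; apply/eqP => ps0.
move: p1; rewrite big1 => [/esym/eqP|t _]; first by rewrite oner_eq0.
exact: invariant_ge0_eq0 p_inv p_ge0 ps0 t.
Qed.

Lemma invariant_stationary_multiple {p x} :
  is_stationary M p -> is_invariant M x -> exists c, forall s, x s = c * p s.
Proof.
move=> p_stat x_inv; have /card_gt0P [s0 _] := stationary_card_gt0 p_stat.
exists (x s0 / p s0) => s.
pose w t := x t - x s0 / p s0 * p t.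
have w_inv : is_invariant M w by apply/invariant_sub/invariant_scale/p_stat.2.2.
have ws0 : w s0 = 0 by rewrite /w mulrVK ?subrr // unitfE gt_eqF ?stationary_gt0.
have Nws0 : -1 * w s0 = 0 by rewrite ws0 mulr0.
have := invariant_le0 (invariant_scale (-1) w_inv) Nws0 s.
rewrite mulN1r oppr_le0 => ws_ge0; apply/eqP; rewrite -subr_eq0 -/(w s).
by rewrite eq_le ws_ge0 (invariant_le0 w_inv ws0).
Qed.

End MarkovChain.

Section StationaryDistribution.
Context {R : realType} {S : finType} {M : S -> S -> R}.
Hypothesis M_stoch : stochastic M.

Lemma sum_enum_val (F : S -> R) : \sum_s F s = \sum_(i < #|S|) F (enum_val i).
Proof. by rewrite (reindex (@enum_val S predT)) //; apply/onW_bij/enum_val_bij. Qed.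

Definition id_sub_mx : 'M[R]_#|S| :=
  \matrix_(i, j) ((i == j)%:R - M (enum_val i) (enum_val j)).

Lemma invariant_left_kernel {v : 'rV[R]_#|S|} :
  v *m id_sub_mx = 0 -> is_invariant M (fun s => v 0 (enum_rank s)).
Proof.
move=> vB0 s'; have := congr1 (fun w : 'rV[R]_#|S| => w 0 (enum_rank s')) vB0.
rewrite !mxE; under eq_bigr do rewrite mxE mulrBr.
rewrite sumrB (bigD1 (enum_rank s')) //= eqxx mulr1 big1 ?addr0 => [|i /negPf->]; last first.
  by rewrite mulr0.
move/eqP; rewrite subr_eq0 => /eqP ->; rewrite sum_enum_val.
by apply: eq_bigr => i _; rewrite enum_valK enum_rankK.
Qed.

Lemma stationary_normalize {x} :
  is_invariant M x -> (forall s, 0 <= x s) -> 0 < \sum_s x s ->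
  is_stationary M [ffun s => x s / \sum_t x t].
Proof.
move=> x_inv x_ge0 x_gt0; split; [|split].
- by move=> s; rewrite ffunE divr_ge0 ?x_ge0 ?ltW.
- by under eq_bigr do rewrite ffunE; rewrite -mulr_suml mulfV ?gt_eqF.
- move=> s'; rewrite ffunE -(x_inv s') mulr_suml.
  by apply: eq_bigr => s _; rewrite ffunE mulrAC.
Qed.

(* [M] fixes the constant vectors, so [1] is also an eigenvalue of [M^T]; the
   absolute value of a corresponding eigenvector is again invariant. *)
Lemma stationary_exists (s0 : S) : exists p, is_stationary M p.
Proof.
have /det0P [v v_neq0 vB0] : \det id_sub_mx == 0.
  rewrite -det_tr; apply/det0P; exists (const_mx 1).
    by apply/eqP => /matrixP/(_ 0 (enum_rank s0)); rewrite !mxE; apply/eqP/oner_neq0.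
  apply/rowP => j; rewrite !mxE; under eq_bigr do rewrite !mxE mul1r.
  rewrite sumrB (bigD1 j) //= eqxx big1 ?addr0 => [|i]; last first.
    by move/negPf; rewrite eq_sym => ->.
  by rewrite -sum_enum_val M_stoch.2 subrr.
pose x : S -> R := fun s => v 0 (enum_rank s).
have [k vk_neq0] : exists k, v 0 k != 0.
  apply/existsP; apply: contraR v_neq0; rewrite negb_exists => /forallP v0.
  by apply/eqP/rowP => k; rewrite mxE; apply/eqP/negbNE/v0.
have norm_x_gt0 : 0 < \sum_s `|x s|.
  by rewrite (bigD1 (enum_val k)) //= /x enum_valK ltr_pwDl ?normr_gt0 ?sumr_ge0.
exists [ffun s => `|x s| / \sum_t `|x t|].
by apply: (stationary_normalize (invariant_norm M_stoch (invariant_left_kernel vB0))).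
Qed.

Hypothesis M_irr : irreducible M.

Lemma kermx_id_sub_mx {p} :
  is_stationary M p -> (kermx id_sub_mx <= \row_i p (enum_val i))%MS.
Proof.
move=> p_stat; apply/row_subP => k.
have vB0 : row k (kermx id_sub_mx) *m id_sub_mx = 0 by rewrite -row_mul mulmx_ker row0.
have [c x_prop] := invariant_stationary_multiple M_stoch M_irr p_stat (invariant_left_kernel vB0).
apply/sub_rVP; exists c; apply/rowP => j.
by have := x_prop (enum_val j); rewrite enum_valK !mxE => ->.
Qed.

(* Both spaces have dimension [#|S| - 1]: by irreducibility the left kernel of
   [I - M] is the line spanned by [p]. *)
Lemma id_sub_mx_tr_eqmx {p} :
  is_stationary M p -> (id_sub_mx^T == kermx (\col_i p (enum_val i)))%MS.
Proof.
move=> p_stat; set pc := \col_i p (enum_val i).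
have sub : (id_sub_mx^T <= kermx pc)%MS.
  apply/sub_kermxP/matrixP => i j; rewrite !ord1 !mxE.
  under eq_bigr do rewrite !mxE mulrBl.
  rewrite sumrB (bigD1 i) //= eqxx mul1r big1 ?addr0 => [|k /negPf->]; last by rewrite mul0r.
  rewrite -(sum_enum_val (fun s => M s (enum_val i) * p s)) -{1}(p_stat.2.2 (enum_val i)).
  by apply/eqP; rewrite subr_eq0; apply/eqP/eq_bigr => s _; rewrite mulrC.
have pc_neq0 : pc != 0.
  apply/eqP => /matrixP pc0; move: p_stat.2.1; rewrite big1 => [/esym/eqP|s _].
    by rewrite oner_eq0.
  by have := pc0 (enum_rank s) 0; rewrite !mxE enum_rankK.
have rk_pc : \rank pc = 1%N.
  by apply/eqP; rewrite eqn_leq rank_leq_col lt0n mxrank_eq0.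
have rk_ker := leq_trans (mxrankS (kermx_id_sub_mx p_stat)) (rank_leq_row _).
have rk_sub := mxrankS sub.
apply/andP; split=> //; rewrite -(mxrank_leqif_sup sub).2.
move: rk_ker rk_sub; rewrite !mxrank_tr !mxrank_ker rk_pc -[#|xpredT|]/#|S|; lia.
Qed.

Lemma poisson_solvable {p h} :
  is_stationary M p -> \sum_s p s * h s = 0 ->
  exists u : {ffun S -> R}, forall s, u s = h s + \sum_s' M s s' * u s'.
Proof.
move=> p_stat h0; pose hr : 'rV[R]_#|S| := \row_i h (enum_val i).
have h_ker : (hr <= kermx (\col_i p (enum_val i)))%MS.
  apply/sub_kermxP/matrixP => i j; rewrite !ord1 !mxE.
  under eq_bigr do rewrite !mxE.
  by rewrite -(sum_enum_val (fun s => h s * p s)) -[RHS]h0; apply: eq_bigr => s _; rewrite mulrC.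
have [_ ker_sub] := andP (id_sub_mx_tr_eqmx p_stat).
have /submxP [D hD] := submx_trans h_ker ker_sub.
exists [ffun s => D 0 (enum_rank s)] => s; rewrite ffunE.
have := congr1 (fun v : 'rV[R]_#|S| => v 0 (enum_rank s)) hD; rewrite !mxE enum_rankK.
under eq_bigr do rewrite !mxE mulrBr.
rewrite sumrB (bigD1 (enum_rank s)) //= eqxx mulr1 big1 ?addr0 => [->|j]; last first.
  by rewrite eq_sym => /negPf ->; rewrite mulr0.
rewrite (sum_enum_val (fun s' => M s s' * _)).
by under [X in _ = _ + X]eq_bigr do rewrite ffunE enum_valK mulrC; rewrite enum_rankK subrK.
Qed.

End StationaryDistribution.

Section StationaryPerturbation.
Context {R : realType} {S : finType} {M0 : S -> S -> R}.

(* [(pd - p0) h = pd (I - M0) u = d pd (M1 - M0) u] since [pd] is invariant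
   under [(1 - d) M0 + d M1]. *)
Lemma stationary_mean_shift {M1 : S -> S -> R} {p0 pd : {ffun S -> R}} {d} {h u : S -> R} :
  (forall s, u s = (h s - \sum_t p0 t * h t) + \sum_s' M0 s s' * u s') ->
  is_stationary (fun s s' => (1 - d) * M0 s s' + d * M1 s s') pd ->
  \sum_s pd s * h s - \sum_s p0 s * h s =
    d * \sum_s pd s * (\sum_s' M1 s s' * u s' - \sum_s' M0 s s' * u s').
Proof.
move=> u_poisson [_ [pd1 pd_inv]]; set c := \sum_t p0 t * h t in u_poisson *.
pose M0u s := \sum_s' M0 s s' * u s'; pose M1u s := \sum_s' M1 s s' * u s'.
have pd_u : \sum_s pd s * u s = \sum_s pd s * ((1 - d) * M0u s + d * M1u s).
  transitivity (\sum_s' (\sum_s pd s * ((1 - d) * M0 s s' + d * M1 s s')) * u s').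
    by apply: eq_bigr => s' _; rewrite pd_inv.
  under eq_bigr do rewrite mulr_suml.
  rewrite exchange_big /=; apply: eq_bigr => s _.
  by rewrite /M0u /M1u !mulr_sumr -big_split /= mulr_sumr; apply: eq_bigr => s' _; ring.
have pd_hc : \sum_s pd s * (h s - c) = \sum_s pd s * h s - c.
  by under eq_bigr do rewrite mulrBr; rewrite sumrB -mulr_suml pd1 mul1r.
have pd_hu : \sum_s pd s * (h s - c) = \sum_s pd s * u s - \sum_s pd s * M0u s.
  by rewrite -sumrB; apply: eq_bigr => s _; rewrite u_poisson /M0u; ring.
rewrite -pd_hc pd_hu pd_u -sumrB mulr_sumr.
by apply: eq_bigr => s _; rewrite /M0u /M1u; ring.
Qed.

Lemma stationary_mean_lipschitz (M1 : S -> S -> R) (h : S -> R) {p0 : {ffun S -> R}} :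
  stochastic M0 -> irreducible M0 -> is_stationary M0 p0 ->
  exists C, forall d (pd : {ffun S -> R}),
    is_stationary (fun s s' => (1 - d) * M0 s s' + d * M1 s s') pd ->
    `|\sum_s pd s * h s - \sum_s p0 s * h s| <= C * `|d|.
Proof.
move=> M0_stoch M0_irr p0_stat.
have [u u_poisson] : exists u : {ffun S -> R},
    forall s, u s = (h s - \sum_t p0 t * h t) + \sum_s' M0 s s' * u s'.
  apply: (poisson_solvable M0_stoch M0_irr p0_stat).
  by under eq_bigr do rewrite mulrBr; rewrite sumrB -mulr_suml p0_stat.2.1 mul1r subrr.
exists (\sum_s `|\sum_s' M1 s s' * u s' - \sum_s' M0 s s' * u s'|) => d pd pd_stat.
rewrite (stationary_mean_shift u_poisson pd_stat) normrM mulrC ler_wpM2r //.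
exact: norm_wsum_le pd_stat.1 pd_stat.2.1.
Qed.

End StationaryPerturbation.

Section Policies.
Context {R : realType} {S : finType} {N : nat} {A : 'I_N -> finType}.
Context {P : S -> jact A -> S -> R} {r : S -> jact A -> R} {beta : R}.
Implicit Types (nu : jpol R S A) (d : detpol S A).

Lemma jprob_ge0 nu s b : is_jpolicy nu -> 0 <= jprob nu s b.
Proof. by move=> nu_pol; apply: prodr_ge0 => i _; apply: (nu_pol i s).1. Qed.

Lemma jprob_sum1 nu s : is_jpolicy nu -> \sum_b jprob nu s b = 1.
Proof.
move=> nu_pol; rewrite /jprob (sum_jact_prod (fun i a => nu i s a)).
by rewrite big1 // => i _; apply: (nu_pol i s).2.
Qed.

Lemma jprob_split nu i s b :
  jprob nu s b = nu i s (b i) * \prod_(k < N | k != i) nu k s (b k).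
Proof. by rewrite /jprob (bigD1 i). Qed.

Definition mean_sa (p : S -> R) (q : S -> jact A -> R) (F : S -> jact A -> R) :=
  \sum_s p s * \sum_b q s b * F s b.

Lemma mean_sa_affine {p q F G H} a0 a1 a2 :
  \sum_s p s = 1 -> (forall s, \sum_b q s b = 1) ->
  (forall s b, H s b = a0 + a1 * F s b + a2 * G s b) ->
  mean_sa p q H = a0 + a1 * mean_sa p q F + a2 * mean_sa p q G.
Proof.
move=> p1 q1 H_affine; rewrite /mean_sa -wsum_affine //.
apply: eq_bigr => s _; rewrite -wsum_affine //; congr (_ * _).
by apply: eq_bigr => b _; rewrite H_affine.
Qed.

Hypothesis P_kernel : is_kernel P.

Lemma Pmu_stochastic {nu} : is_jpolicy nu -> stochastic (Pmu P nu).
Proof.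
move=> nu_pol; split=> [s s'|s].
  by apply: sumr_ge0 => b _; rewrite mulr_ge0 ?jprob_ge0 ?(P_kernel s b).1.
rewrite /Pmu exchange_big /=.
by under eq_bigr do rewrite -mulr_sumr (P_kernel s _).2 mulr1; apply: jprob_sum1.
Qed.

Variable s0 : S.

Lemma pi_mu_stationary {nu} : is_jpolicy nu -> is_stationary (Pmu P nu) (pi_mu P nu).
Proof.
move=> nu_pol; have := xgetPex [ffun => 0] (stationary_exists (Pmu_stochastic nu_pol) s0).
by [].
Qed.

Lemma mean_sa_f_sa nu nu' : is_jpolicy nu' ->
  mean_sa (pi_mu P nu') (jprob nu') (f_sa P r beta nu) =
    Jmv P r beta nu' - beta * (Defs.eta P r nu' - Defs.eta P r nu) ^+ 2.
Proof.
move=> nu'_pol; have [_ [pi1 _]] := pi_mu_stationary nu'_pol.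
set e := Defs.eta P r nu; set e' := Defs.eta P r nu'.
have mean_r : mean_sa (pi_mu P nu') (jprob nu') r = e' by [].
have mean_dev : mean_sa (pi_mu P nu') (jprob nu') (fun s b => (r s b - e') ^+ 2)
  = zeta P r nu' by [].
rewrite (mean_sa_affine (F := r) (G := fun s b => (r s b - e') ^+ 2)
  (2 * beta * (e' - e) * e' - beta * (e' - e) ^+ 2) (1 - 2 * beta * (e' - e)) (- beta)) //.
- by rewrite mean_r mean_dev /Jmv -/e'; ring.
- by move=> s; apply: jprob_sum1.
- by move=> s b; rewrite /f_sa -/e; ring.
Qed.

Lemma mean_sa_drift nu (V : S -> R) : is_jpolicy nu ->
  mean_sa (pi_mu P nu) (jprob nu) (fun s b => \sum_s' P s b s' * V s' - V s) = 0.
Proof.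
move=> nu_pol; have [_ [_ pi_inv]] := pi_mu_stationary nu_pol.
have inner s : \sum_b jprob nu s b * (\sum_s' P s b s' * V s' - V s)
    = \sum_s' Pmu P nu s s' * V s' - V s.
  under eq_bigr do rewrite mulrBr.
  rewrite sumrB -mulr_suml jprob_sum1 // mul1r; congr (_ - _).
  under eq_bigr do rewrite mulr_sumr; rewrite exchange_big /=.
  by apply: eq_bigr => s' _; rewrite /Pmu mulr_suml; apply: eq_bigr => b _; rewrite mulrA.
rewrite /mean_sa; under eq_bigr do rewrite inner mulrBr.
rewrite sumrB; apply/eqP; rewrite subr_eq0; apply/eqP.
under eq_bigr do rewrite mulr_sumr; rewrite exchange_big /=.
by apply: eq_bigr => s' _; rewrite -pi_inv mulr_suml; apply: eq_bigr => s _; rewrite mulrA.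
Qed.

(* This holds whatever [Vf] is, since its drift term has mean zero. *)
Lemma Jmv_sub {nu nu'} : is_jpolicy nu' ->
  Jmv P r beta nu' - Jmv P r beta nu =
    mean_sa (pi_mu P nu') (jprob nu') (Af P r beta nu)
    + beta * (Defs.eta P r nu' - Defs.eta P r nu) ^+ 2.
Proof.
move=> nu'_pol.
rewrite (mean_sa_affine (F := f_sa P r beta nu)
  (G := fun s b => \sum_s' P s b s' * Vf P r beta nu s' - Vf P r beta nu s)
  (- Jmv P r beta nu) 1 1).
- by rewrite mean_sa_drift // mean_sa_f_sa //; ring.
- exact: (pi_mu_stationary nu'_pol).2.1.
- by move=> s; apply: jprob_sum1.
- by move=> s b; rewrite /Af /Qf; ring.
Qed.

Lemma Vf_solves {nu} : is_jpolicy nu -> irreducible (Pmu P nu) ->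
  is_Vf P r beta nu (Vf P r beta nu).
Proof.
move=> nu_pol nu_irr; have pi_stat := pi_mu_stationary nu_pol.
have mean_f : \sum_s pi_mu P nu s * f_s P r beta nu s = Jmv P r beta nu.
  by have := mean_sa_f_sa nu nu nu_pol; rewrite subrr expr0n mulr0 subr0.
have centered : \sum_s pi_mu P nu s * (f_s P r beta nu s - Jmv P r beta nu) = 0.
  by under eq_bigr do rewrite mulrBr; rewrite sumrB -mulr_suml pi_stat.2.1 mul1r mean_f subrr.
have [u u_poisson] := poisson_solvable (Pmu_stochastic nu_pol) nu_irr pi_stat centered.
by apply: (xgetPex [ffun => 0] (P := [set V | is_Vf P r beta nu V])); exists u.
Qed.

Lemma sum_jprob_Af {nu} s : is_jpolicy nu -> is_Vf P r beta nu (Vf P r beta nu) ->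
  \sum_b jprob nu s b * Af P r beta nu s b = 0.
Proof.
move=> nu_pol V_sol.
transitivity (\sum_b jprob nu s b * ((- Jmv P r beta nu - Vf P r beta nu s)
   + 1 * f_sa P r beta nu s b + 1 * \sum_s' P s b s' * Vf P r beta nu s')).
  by apply: eq_bigr => b _; rewrite /Af /Qf; congr (_ * _); ring.
rewrite wsum_affine ?jprob_sum1 // !mul1r.
have -> : \sum_b jprob nu s b * \sum_s' P s b s' * Vf P r beta nu s'
    = \sum_s' Pmu P nu s s' * Vf P r beta nu s'.
  under eq_bigr do rewrite mulr_sumr; rewrite exchange_big /=.
  by apply: eq_bigr => s' _; rewrite /Pmu mulr_suml; apply: eq_bigr => b _; rewrite mulrA.
by rewrite (V_sol s) /f_s; ring.
Qed.

Lemma sum_ExpAdv nu j s (w : A j -> R) :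
  \sum_a w a * ExpAdv P r beta nu s a =
    \sum_(b : jact A) (w (b j) * \prod_(k < N | k != j) nu k s (b k)) * Af P r beta nu s b.
Proof.
under eq_bigr do rewrite mulr_sumr.
rewrite exchange_big /=; apply: eq_bigr => b _.
rewrite (bigD1 (b j)) //= eqxx [X in _ + X]big1 ?addr0 => [|a]; first by rewrite mulr1 mulrA.
by rewrite eq_sym => /negPf ->; rewrite mulr0 mul0r mulr0.
Qed.

Lemma sum_policy_ExpAdv {nu} j s : is_jpolicy nu -> is_Vf P r beta nu (Vf P r beta nu) ->
  \sum_a nu j s a * ExpAdv P r beta nu s a = 0.
Proof.
move=> nu_pol V_sol; rewrite sum_ExpAdv.
by under eq_bigr do rewrite -jprob_split; apply: sum_jprob_Af.
Qed.

Lemma is_jpolicy_of_det d : is_jpolicy (of_det R d).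
Proof.
move=> i s; split=> [a|]; first by rewrite /of_det ler0n.
by rewrite /of_det (bigD1 (d i s)) //= eqxx big1 ?addr0 // => a /negPf ->.
Qed.

Lemma sum_of_det d j s (F : A j -> R) : \sum_(a : A j) of_det R d s a * F a = F (d j s).
Proof.
rewrite (bigD1 (d j s)) //= /of_det eqxx mul1r big1 ?addr0 // => a /negPf ->.
by rewrite mul0r.
Qed.

Lemma ExpAdv_of_det_self d j s : is_Vf P r beta (of_det R d) (Vf P r beta (of_det R d)) ->
  ExpAdv P r beta (of_det R d) s (d j s) = 0.
Proof.
move=> V_sol; rewrite -(sum_of_det d j s (ExpAdv P r beta (of_det R d) s)).
exact: sum_policy_ExpAdv (is_jpolicy_of_det d) V_sol.
Qed.

Lemma sum_jprob_of_det_Af d d' j s : (forall k, k != j -> d' k = d k) ->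
  \sum_b jprob (of_det R d') s b * Af P r beta (of_det R d) s b =
    ExpAdv P r beta (of_det R d) s (d' j s).
Proof.
move=> d'_d; rewrite -(sum_of_det d' j s (ExpAdv P r beta (of_det R d) s)) sum_ExpAdv.
apply: eq_bigr => b _; rewrite (jprob_split _ j); congr (_ * _ * _).
by apply: eq_bigr => k k_j; rewrite /of_det d'_d.
Qed.

End Policies.

Section UnilateralDeviation.
Context {R : realType} {S : finType} {N : nat} {A : 'I_N -> finType}.
Context {P : S -> jact A -> S -> R} {r : S -> jact A -> R} {beta : R}.
Context {mu : jpol R S A} {i : 'I_N} {nu : S -> A i -> R}.

Lemma mix_at d : mix mu i nu d i = fun s a => (1 - d) * mu i s a + d * nu s a.
Proof. by rewrite /mix dfwith_in. Qed.

Lemma mix_other d k : k != i -> mix mu i nu d k = mu k.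
Proof. by move=> k_i; rewrite /mix dfwith_out // eq_sym. Qed.

Lemma mix0 : mix mu i nu 0 = mu.
Proof.
apply: functional_extensionality_dep => k; have [->|k_i] := eqVneq k i; last exact: mix_other.
by rewrite mix_at; apply/funext => s; apply/funext => a; rewrite subr0 mul1r mul0r addr0.
Qed.

Lemma jprob_mix d s b :
  jprob (mix mu i nu d) s b = (1 - d) * jprob mu s b + d * jprob (mix mu i nu 1) s b.
Proof.
have others d' : \prod_(k < N | k != i) mix mu i nu d' k s (b k)
    = \prod_(k < N | k != i) mu k s (b k).
  by apply: eq_bigr => k k_i; rewrite mix_other.
by rewrite !(jprob_split _ i) !others !mix_at; ring.
Qed.

Lemma sum_jprob_mix d s (F : jact A -> R) :
  \sum_b jprob (mix mu i nu d) s b * F b =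
    (1 - d) * \sum_b jprob mu s b * F b + d * \sum_b jprob (mix mu i nu 1) s b * F b.
Proof.
rewrite !mulr_sumr -big_split /=; apply: eq_bigr => b _.
by rewrite jprob_mix; ring.
Qed.

Lemma Pmu_mix d s s' :
  Pmu P (mix mu i nu d) s s' = (1 - d) * Pmu P mu s s' + d * Pmu P (mix mu i nu 1) s s'.
Proof. exact: sum_jprob_mix. Qed.

Lemma sum_jprob_deviation_Af s :
  \sum_b jprob (mix mu i nu 1) s b * Af P r beta mu s b =
    \sum_a nu s a * ExpAdv P r beta mu s a.
Proof.
rewrite sum_ExpAdv; apply: eq_bigr => b _; rewrite (jprob_split _ i) mix_at.
congr (_ * _ * _); first by rewrite subrr mul0r add0r mul1r.
by apply: eq_bigr => k k_i; rewrite mix_other.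
Qed.

Hypotheses (mu_pol : is_jpolicy mu) (nu_pol : is_policy_i nu).

Lemma is_jpolicy_mix {d} : 0 <= d <= 1 -> is_jpolicy (mix mu i nu d).
Proof.
case/andP=> d_ge0 d_le1 k s; have [->|k_i] := eqVneq k i; last first.
  by rewrite mix_other //; apply: mu_pol.
rewrite mix_at; split=> [a|].
  by rewrite addr_ge0 ?mulr_ge0 ?subr_ge0 ?(mu_pol i s).1 ?(nu_pol s).1.
by rewrite big_split /= -!mulr_sumr (mu_pol i s).2 (nu_pol s).2; ring.
Qed.

End UnilateralDeviation.

Local Open Scope classical_set_scope.

Lemma cvg_at_right_linear_bound (R : realType) (f : R -> R) (l C : R) :
  (forall d, 0 < d -> d < 1 -> `|f d - l| <= C * d) -> f @ (0 : R)^'+ --> l.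
Proof.
move=> f_bound; apply/cvgrPdist_le => e e_gt0.
have eC_gt0 : 0 < e / (`|C| + 1) by rewrite divr_gt0 // ltr_pwDr.
near=> d.
have d_gt0 : 0 < d by near: d; exact: nbhs_right_gt.
have d_lt1 : d < 1 by near: d; exact: nbhs_right_lt.
have : d <= e / (`|C| + 1) by near: d; exact: nbhs_right_ltW.
rewrite ler_pdivlMr ?ltr_pwDr // => dC.
rewrite distrC; apply: le_trans (f_bound d d_gt0 d_lt1) _.
have := ler_norm C; have := normr_ge0 C; nra.
Unshelve. all: by end_near.
Qed.

Section FirstOrderStationarity.
Context {R : realType} {S : finType} {N : nat} {A : 'I_N -> finType}.
Context {P : S -> jact A -> S -> R} {r : S -> jact A -> R} {beta : R}.
Context {mu : jpol R S A} {i : 'I_N} {nu : S -> A i -> R}.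
Hypotheses (P_kernel : is_kernel P) (beta_ge0 : 0 <= beta).
Hypotheses (mu_pol : is_jpolicy mu) (mu_irr : irreducible (Pmu P mu)).
Hypothesis nu_pol : is_policy_i nu.
Variable s0 : S.

Local Notation mixd d := (mix mu i nu d).
Local Notation J := (Jmv P r beta).
Local Notation eta := (Defs.eta P r).
Local Notation gain s := (\sum_a nu s a * ExpAdv P r beta mu s a).

Lemma pi_mu_mix_stationary {d} : 0 <= d <= 1 ->
  is_stationary (fun s s' => (1 - d) * Pmu P mu s s' + d * Pmu P (mixd 1) s s')
    (pi_mu P (mixd d)).
Proof.
move=> d01; have -> : (fun s s' => (1 - d) * Pmu P mu s s' + d * Pmu P (mixd 1) s s')
    = Pmu P (mixd d) by apply/funext => s; apply/funext => s'; rewrite [RHS]Pmu_mix.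
exact: (pi_mu_stationary P_kernel s0 (is_jpolicy_mix mu_pol nu_pol d01)).
Qed.

Lemma mean_mix_lipschitz (h : S -> R) : exists C, forall d, 0 <= d <= 1 ->
  `|\sum_s pi_mu P (mixd d) s * h s - \sum_s pi_mu P mu s * h s| <= C * d.
Proof.
have [C C_bound] := stationary_mean_lipschitz (Pmu P (mixd 1)) h
  (Pmu_stochastic P_kernel mu_pol) mu_irr (pi_mu_stationary P_kernel s0 mu_pol).
exists C => d d01; have [d_ge0 _] := andP d01.
by apply: le_trans (C_bound _ _ (pi_mu_mix_stationary d01)) _; rewrite ger0_norm.
Qed.

Lemma eta_mix_lipschitz : exists C, forall d, 0 <= d <= 1 ->
  `|eta (mixd d) - eta mu| <= C * d.
Proof.
pose r0 s := \sum_b jprob mu s b * r s b.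
pose r1 s := \sum_b jprob (mixd 1) s b * r s b.
have [C C_bound] := mean_mix_lipschitz r0.
exists (C + \sum_s `|r1 s - r0 s|) => d d01; have [d_ge0 _] := andP d01.
have eta_d : eta (mixd d) = \sum_s pi_mu P (mixd d) s * r0 s
    + d * \sum_s pi_mu P (mixd d) s * (r1 s - r0 s).
  rewrite mulr_sumr -big_split /=; apply: eq_bigr => s _.
  by rewrite sum_jprob_mix /r0 /r1; ring.
rewrite eta_d addrAC mulrDl; apply: le_trans (ler_normD _ _) _.
apply: lerD; first exact: C_bound.
rewrite normrM ger0_norm // mulrC ler_wpM2r //.
by have [pd_ge0 [pd1 _]] := pi_mu_mix_stationary d01; apply: norm_wsum_le.
Qed.

Lemma Jmv_mix_sub d : 0 <= d <= 1 ->
  J (mixd d) - J mu = d * \sum_s pi_mu P (mixd d) s * gain s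
                      + beta * (eta (mixd d) - eta mu) ^+ 2.
Proof.
move=> d01; rewrite (Jmv_sub P_kernel s0 (is_jpolicy_mix mu_pol nu_pol d01)).
congr (_ + _); rewrite /mean_sa mulr_sumr; apply: eq_bigr => s _.
rewrite sum_jprob_mix sum_jprob_deviation_Af.
by rewrite (sum_jprob_Af s mu_pol (Vf_solves P_kernel s0 mu_pol mu_irr)); ring.
Qed.

(* [J (mix d) - J mu = d pd gain + beta O(d)^2] and [pd gain = pi gain + O(d)]. *)
Lemma Jmv_mix_derivative :
  (fun d => (J (mixd d) - J (mixd 0)) / d) @ (0 : R)^'+ -->
    \sum_s pi_mu P mu s * gain s.
Proof.
have [Cg gain_bound] := mean_mix_lipschitz (fun s => gain s).
have [Ce eta_bound] := eta_mix_lipschitz.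
apply: (@cvg_at_right_linear_bound _ _ _ (Cg + beta * Ce ^+ 2)) => d d_gt0 d_lt1.
have d01 : 0 <= d <= 1 by rewrite !ltW.
move: (gain_bound d d01) (eta_bound d d01); rewrite mix0 Jmv_mix_sub //.
move: (\sum_s _ * gain s) (eta _ - eta _) => a y; rewrite !ler_norml => /andP[a1 a2] /andP[y1 y2].
have y2_le : y ^+ 2 / d <= Ce ^+ 2 * d by rewrite ler_pdivrMr //; nra.
have y2_ge0 : 0 <= y ^+ 2 / d by rewrite divr_ge0 ?sqr_ge0 ?ltW.
have -> : (d * a + beta * y ^+ 2) / d - \sum_s pi_mu P mu s * gain s
    = (a - \sum_s pi_mu P mu s * gain s) + beta * (y ^+ 2 / d).
  by field; rewrite gt_eqF.
have := ler_wpM2l beta_ge0 y2_le; have := mulr_ge0 beta_ge0 y2_ge0.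
lra.
Qed.

End FirstOrderStationarity.


Lemma fo_stationary_of_ExpAdv_le0 {R : realType} {S : finType} {N : nat} {A : 'I_N -> finType}
    {P : S -> jact A -> S -> R} {r : S -> jact A -> R} {beta : R} {mu : jpol R S A} (s0 : S) :
  is_kernel P -> 0 <= beta -> is_jpolicy mu -> irreducible (Pmu P mu) ->
  (forall i s (a : A i), ExpAdv P r beta mu s a <= 0) -> fo_stationary P r beta mu.
Proof.
move=> P_kernel beta_ge0 mu_pol mu_irr adv_le0 i nu nu_pol.
exists (\sum_s pi_mu P mu s * \sum_a nu s a * ExpAdv P r beta mu s a); split.
  exact: Jmv_mix_derivative P_kernel beta_ge0 mu_pol mu_irr nu_pol s0.
apply: sumr_le0 => s _; rewrite mulr_ge0_le0 ?(pi_mu_stationary P_kernel s0 mu_pol).1 //.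
by apply: sumr_le0 => a _; rewrite mulr_ge0_le0 ?(nu_pol s).1 ?adv_le0.
Qed.

Section PolicyIteration.
Context {R : realType} {S : finType} {N : nat} {A : 'I_N -> finType}.
Context {P : S -> jact A -> S -> R} {r : S -> jact A -> R} {beta : R}.
Context {mu : nat -> detpol S A} {sigma : nat -> {perm 'I_N}}.
Hypotheses (P_kernel : is_kernel P) (beta_ge0 : 0 <= beta).
Hypothesis P_ergodic : forall nu : jpol R S A, is_jpolicy nu -> ergodic (Pmu P nu).
Hypothesis mapi_run : MV_MAPI_run P r beta mu sigma.
Variable s0 : S.

Local Notation J d := (Jmv P r beta (of_det R d)).
Local Notation ExpAdv d := (ExpAdv P r beta (of_det R d)).

Lemma hat0 k : hat mu sigma k 0 = mu k.
Proof. by apply: functional_extensionality_dep => i; rewrite /hat ltn0. Qed.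

Lemma hatN k : hat mu sigma k N = mu k.+1.
Proof. by apply: functional_extensionality_dep => i; rewrite /hat ltn_ord. Qed.

Lemma hat_at k (h : 'I_N) : hat mu sigma k h (sigma k h) = mu k (sigma k h).
Proof. by rewrite /hat permK ltnn. Qed.

Lemma hatS_at k (h : 'I_N) : hat mu sigma k h.+1 (sigma k h) = mu k.+1 (sigma k h).
Proof. by rewrite /hat permK ltnSn. Qed.

Lemma hatS_other k (h : 'I_N) i : i != sigma k h -> hat mu sigma k h.+1 i = hat mu sigma k h i.
Proof.
move=> i_h; rewrite /hat ltnS leq_eqVlt.
suff /negPf -> : nat_of_ord ((sigma k)^-1 i)%g != h by [].
by apply: contra i_h => /eqP/val_inj <-; rewrite permKV.
Qed.

Lemma Vf_solves_of_det d : is_Vf P r beta (of_det R d) (Vf P r beta (of_det R d)).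
Proof.
have pol := is_jpolicy_of_det (R := R) d.
exact: (Vf_solves P_kernel s0 pol (P_ergodic _ pol).1).
Qed.

Lemma ExpAdv_hat_ge0 k (h : 'I_N) s :
  0 <= ExpAdv (hat mu sigma k h) s (mu k.+1 (sigma k h) s).
Proof.
have [best _] := mapi_run k h s; apply: le_trans (best (mu k (sigma k h) s)).
by rewrite -hat_at ExpAdv_of_det_self ?lexx //; apply: Vf_solves_of_det.
Qed.

Lemma ExpAdv_hat_gt0 k (h : 'I_N) s : mu k.+1 (sigma k h) s != mu k (sigma k h) s ->
  0 < ExpAdv (hat mu sigma k h) s (mu k.+1 (sigma k h) s).
Proof.
move=> changed; rewrite lt_def ExpAdv_hat_ge0 andbT; apply: contra changed => /eqP adv0.
have [best tie] := mapi_run k h s; apply/eqP/tie => a; apply: le_trans (best a) _.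
by rewrite adv0 -hat_at ExpAdv_of_det_self ?lexx //; apply: Vf_solves_of_det.
Qed.

Lemma Jmv_hatS_sub k (h : 'I_N) :
  J (hat mu sigma k h.+1) - J (hat mu sigma k h) =
    \sum_s pi_mu P (of_det R (hat mu sigma k h.+1)) s
           * ExpAdv (hat mu sigma k h) s (mu k.+1 (sigma k h) s)
    + beta * (Defs.eta P r (of_det R (hat mu sigma k h.+1))
              - Defs.eta P r (of_det R (hat mu sigma k h))) ^+ 2.
Proof.
rewrite (Jmv_sub P_kernel s0 (is_jpolicy_of_det _)); congr (_ + _).
apply: eq_bigr => s _; congr (_ * _).
by rewrite (sum_jprob_of_det_Af _ _ _ s (hatS_other k h)) hatS_at.
Qed.

Lemma Jmv_hatS_ge k (h : 'I_N) : J (hat mu sigma k h) <= J (hat mu sigma k h.+1).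
Proof.
rewrite -subr_ge0 Jmv_hatS_sub; apply: addr_ge0; last by rewrite mulr_ge0 ?sqr_ge0.
apply: sumr_ge0 => s _; rewrite mulr_ge0 ?ExpAdv_hat_ge0 //.
exact: (pi_mu_stationary P_kernel s0 (is_jpolicy_of_det _)).1.
Qed.

Lemma Jmv_hatS_gt k (h : 'I_N) s : mu k.+1 (sigma k h) s != mu k (sigma k h) s ->
  J (hat mu sigma k h) < J (hat mu sigma k h.+1).
Proof.
move=> changed; rewrite -subr_gt0 Jmv_hatS_sub.
apply: ltr_wpDr; first by rewrite mulr_ge0 ?sqr_ge0.
have pol := is_jpolicy_of_det (R := R) (hat mu sigma k h.+1).
apply: (wsum_gt0 s) => [t|t|]; rewrite ?ExpAdv_hat_ge0 ?ExpAdv_hat_gt0 //.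
exact: (stationary_gt0 (Pmu_stochastic P_kernel pol) (P_ergodic _ pol).1
  (pi_mu_stationary P_kernel s0 pol) t).
Qed.

Lemma Jmv_hat_le k h1 h2 : (h1 <= h2 <= N)%N -> J (hat mu sigma k h1) <= J (hat mu sigma k h2).
Proof.
elim: h2 => [|h2 IH] /andP[h12 h2N]; first by move: h12; rewrite leqn0 => /eqP->.
move: h12; rewrite leq_eqVlt ltnS => /orP[/eqP->//|h12].
by apply: le_trans (IH _) (Jmv_hatS_ge k (Ordinal h2N)); rewrite h12 ltnW.
Qed.

Lemma Jmv_iter_le k : J (mu k) <= J (mu k.+1).
Proof. by rewrite -hat0 -hatN; apply: Jmv_hat_le; rewrite leq0n leqnn. Qed.

Lemma Jmv_iter_lt k : ~ stopped mu k -> J (mu k) < J (mu k.+1).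
Proof.
move=> not_stopped.
have [i /existsNP [s /eqP changed]] : exists i, ~ forall s, mu k.+1 i s = mu k i s.
  by apply/existsNP => none; apply: not_stopped => i s; apply: none.
set h := ((sigma k)^-1 i)%g; have sigma_h : sigma k h = i by rewrite permKV.
rewrite -hat0 -hatN; apply: le_lt_trans (Jmv_hat_le k 0 h _) _.
  by rewrite leq0n (ltnW (ltn_ord h)).
apply: lt_le_trans (Jmv_hatS_gt k h s _) (Jmv_hat_le k h.+1 N _); first by rewrite sigma_h.
by rewrite ltn_ord leqnn.
Qed.

(* [J] increases strictly along non-stopping iterations, so a run that never
   stops would visit infinitely many distinct deterministic policies. *)
Lemma MV_MAPI_stops : exists K, stopped mu K.
Proof.
apply/not_existsP => never.
have J_lt m n : (m < n)%N -> J (mu m) < J (mu n).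
  elim: n => // n IH; rewrite ltnS leq_eqVlt => /orP[/eqP->|m_n]; first exact: Jmv_iter_lt.
  exact: lt_trans (IH m_n) (Jmv_iter_lt n (never n)).
pose T := {dffun forall i : 'I_N, {ffun S -> A i}}.
pose code (k : 'I_#|T|.+1) : T := [ffun i => [ffun s => mu k i s]].
suff /leq_card : injective code by rewrite card_ord ltnn.
move=> m n code_mn; have mu_mn : mu m = mu n.
  apply: functional_extensionality_dep => i; apply/funext => s.
  by have := congr1 (fun f : T => f i s) code_mn; rewrite !ffunE.
apply/val_inj; case: (ltngtP m n) => // /J_lt; by rewrite mu_mn ltxx.
Qed.

Lemma MV_MAPI_first_stop :
  exists K, (forall k, (k < K)%N -> ~ stopped mu k) /\ stopped mu K.
Proof.
have ex_stop : exists k, `[< stopped mu k >].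
  by have [K stopK] := MV_MAPI_stops; exists K; apply/asboolP.
case: (ex_minnP ex_stop) => K /asboolP stopK minK; exists K; split=> // k k_K.
by move/asboolP/minK; rewrite leqNgt k_K.
Qed.

Lemma stopped_ExpAdv_le0 K : stopped mu K ->
  forall i s (a : A i), ExpAdv (mu K) s a <= 0.
Proof.
move=> stopK i s; rewrite -[i](permKV (sigma K)); set h := ((sigma K)^-1 _)%g => a.
have hat_K : hat mu sigma K h = mu K.
  apply: functional_extensionality_dep => j; rewrite /hat; case: ifP => // _.
  by apply/funext => t; apply: stopK.
have [best _] := mapi_run K h s; rewrite hat_K in best.
by apply: le_trans (best a) _; rewrite stopK ExpAdv_of_det_self ?lexx //; apply: Vf_solves_of_det.
Qed.

End PolicyIteration.

Lemma Jmv_void {R : realType} {S : finType} {N : nat} {A : 'I_N -> finType}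
    (P : S -> jact A -> S -> R) (r : S -> jact A -> R) (beta : R) (nu : jpol R S A) :
  #|S| = 0%N -> Jmv P r beta nu = 0.
Proof.
move=> S_empty; have S0 : (xpredT : pred S) =i xpred0.
  by move=> s; have := card0_eq S_empty s; rewrite !inE.
by rewrite /Jmv /zeta /Defs.eta !big_pred0 // mulr0 subrr.
Qed.

Lemma fo_stationary_void {R : realType} {S : finType} {N : nat} {A : 'I_N -> finType}
    (P : S -> jact A -> S -> R) (r : S -> jact A -> R) (beta : R) (mu : jpol R S A) :
  #|S| = 0%N -> fo_stationary P r beta mu.
Proof.
move=> S_empty i nu _; exists 0; split=> //.
have -> : (fun d : R => (Jmv P r beta (mix mu i nu d) - Jmv P r beta (mix mu i nu 0)) / d)
    = fun=> 0 by apply/funext => d; rewrite !Jmv_void // subrr mul0r.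
exact: cvg_cst.
Qed.

Local Close Scope classical_set_scope.

Theorem theorem2 (R : realType) (S : finType) (N : nat) (A : 'I_N -> finType)
  (P : S -> jact A -> S -> R) (r : S -> jact A -> R) (beta : R)
  (mu : nat -> @detpol S N A) (sigma : nat -> {perm 'I_N}) :
  0 <= beta ->
  is_kernel P ->
  (forall nu : @jpol R S N A, is_jpolicy nu -> ergodic (Pmu P nu)) ->
  MV_MAPI_run P r beta mu sigma ->
  (forall (k h : nat), (h < N)%N ->
     Jmv P r beta (of_det R (hat mu sigma k h))
       <= Jmv P r beta (of_det R (hat mu sigma k h.+1))) /\
  (forall k : nat,
     Jmv P r beta (of_det R (mu k)) <= Jmv P r beta (of_det R (mu k.+1))) /\
  (exists K : nat,
     (forall k, (k < K)%N -> ~ stopped mu k) /\ stopped mu K /\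
     fo_stationary P r beta (of_det R (mu K))).
Proof.
move=> beta_ge0 P_kernel P_ergodic mapi_run.
have [S_empty|/card_gt0P [s0 _]] := posnP #|S|.
  have J0 nu := Jmv_void P r beta nu S_empty.
  split; [by move=> k h _; rewrite !J0|split; first by move=> k; rewrite !J0].
  exists 0%N; split=> //; split; last exact: fo_stationary_void.
  by move=> i s; have := card0_eq S_empty s; rewrite !inE.
split=> [k h h_N|].
  exact: (Jmv_hatS_ge P_kernel beta_ge0 P_ergodic mapi_run s0 k (Ordinal h_N)).
split; first exact: Jmv_iter_le P_kernel beta_ge0 P_ergodic mapi_run s0.
have [K [before stopK]] := MV_MAPI_first_stop P_kernel beta_ge0 P_ergodic mapi_run s0.
exists K; do 2!split=> //.
apply: (fo_stationary_of_ExpAdv_le0 s0 P_kernel beta_ge0 (is_jpolicy_of_det _)).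
  exact: (P_ergodic _ (is_jpolicy_of_det _)).1.
exact: stopped_ExpAdv_le0 P_kernel P_ergodic mapi_run s0 _ stopK.
Qed.
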